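(* Let $\mathcal{H}$ be a complex Hilbert space and let $T\in\mathbb{B}(\mathcal{H})$ have Cartesian decomposition $T=T_1+iT_2$, where $T_1=\frac{T+T^*}{2}$ and $T_2=\frac{T-T^*}{2i}$. Then \[ \|T\|^2+\max\big(\alpha(T),\alpha(T^* )\big)\le 2\,\omega^2(T)+D(T). \]
   Context: $\mathbb{B}(\mathcal{H})$ denotes the algebra of bounded linear operators on the complex Hilbert space $\mathcal{H}$. For $T\in\mathbb{B}(\mathcal{H})$: the numerical radius is $\omega(T)=\sup\{|\langle Tx,x\rangle| : x\in\mathcal{H},\ \|x\|=1\}$; $\|T\|$ is the operator norm; $\alpha(T)=\inf_{\|x\|=1}\|Tx\|^2$; and, with $T_1=\frac{T+T^*}{2}$, $T_2=\frac{T-T^*}{2i}$, $D(T)=2\min(\|T_1\|^2,\|T_2\|^2)=\min\left(\frac{\|T-T^*\|^2}{2},\frac{\|T+T^*\|^2}{2}\right)$. *)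

From Stdlib Require Import Reals.
Open Scope R_scope.

Record Cplx := mkC { Re : R ; Im : R }.

Definition Cadd (a b : Cplx) : Cplx := mkC (Re a + Re b) (Im a + Im b).
Definition Cmul (a b : Cplx) : Cplx :=
  mkC (Re a * Re b - Im a * Im b) (Re a * Im b + Im a * Re b).
Definition Cconj (a : Cplx) : Cplx := mkC (Re a) (- Im a).
Definition Cabs (a : Cplx) : R := sqrt (Re a ^ 2 + Im a ^ 2).
Definition C0 : Cplx := mkC 0 0.
Definition C1 : Cplx := mkC 1 0.
Definition RtoC (r : R) : Cplx := mkC r 0.

Record HilbertSpace := {
  carrier :> Type;
  vzero : carrier;
  vadd : carrier -> carrier -> carrier;
  vopp : carrier -> carrier;
  vscal : Cplx -> carrier -> carrier;
  inner : carrier -> carrier -> Cplx;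
  vadd_assoc : forall x y z, vadd x (vadd y z) = vadd (vadd x y) z;
  vadd_comm : forall x y, vadd x y = vadd y x;
  vadd_0 : forall x, vadd x vzero = x;
  vadd_opp : forall x, vadd x (vopp x) = vzero;
  vscal_1 : forall x, vscal C1 x = x;
  vscal_assoc : forall a b x, vscal a (vscal b x) = vscal (Cmul a b) x;
  vscal_distr_v : forall a x y, vscal a (vadd x y) = vadd (vscal a x) (vscal a y);
  vscal_distr_s : forall a b x, vscal (Cadd a b) x = vadd (vscal a x) (vscal b x);
  inner_lin : forall a x y z,
      inner (vadd (vscal a x) y) z = Cadd (Cmul a (inner x z)) (inner y z);
  inner_sym : forall x y, inner y x = Cconj (inner x y);
  inner_pos : forall x, 0 <= Re (inner x x);
  inner_def : forall x, inner x x = C0 -> x = vzero;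
  complete : forall u : nat -> carrier,
      (forall eps, eps > 0 -> exists N, forall m n, (m >= N)%nat -> (n >= N)%nat ->
         sqrt (Re (inner (vadd (u m) (vopp (u n))) (vadd (u m) (vopp (u n))))) < eps) ->
      exists l, forall eps, eps > 0 -> exists N, forall n, (n >= N)%nat ->
         sqrt (Re (inner (vadd (u n) (vopp l)) (vadd (u n) (vopp l)))) < eps
}.

Arguments vzero {h}.
Arguments vadd {h}.
Arguments vopp {h}.
Arguments vscal {h}.
Arguments inner {h}.

Section Ops.
Variable H : HilbertSpace.

Definition vnorm (x : H) : R := sqrt (Re (inner x x)).

Definition bounded_operator (T : H -> H) : Prop :=
  (forall a x y, T (vadd (vscal a x) y) = vadd (vscal a (T x)) (T y)) /\
  (exists M, forall x, vnorm (T x) <= M * vnorm x).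

Definition is_adjoint (T S : H -> H) : Prop :=
  forall x y, inner (T x) y = inner x (S y).

Definition op_add (A B : H -> H) : H -> H := fun x => vadd (A x) (B x).
Definition op_sub (A B : H -> H) : H -> H := fun x => vadd (A x) (vopp (B x)).
Definition op_scal (c : Cplx) (A : H -> H) : H -> H := fun x => vscal c (A x).

Definition cart_re (T Tadj : H -> H) : H -> H := op_scal (mkC (1/2) 0) (op_add T Tadj).
(* 1/(2i) = -i/2 *)
Definition cart_im (T Tadj : H -> H) : H -> H := op_scal (mkC 0 (-(1/2))) (op_sub T Tadj).

Definition is_glb (E : R -> Prop) (m : R) : Prop :=
  (forall r, E r -> m <= r) /\ (forall b, (forall r, E r -> b <= r) -> b <= m).

Definition is_opnorm (T : H -> H) (n : R) : Prop :=
  is_lub (fun r => exists x : H, vnorm x = 1 /\ r = vnorm (T x)) n.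

Definition is_numrad (T : H -> H) (w : R) : Prop :=
  is_lub (fun r => exists x : H, vnorm x = 1 /\ r = Cabs (inner (T x) x)) w.

Definition is_alpha (T : H -> H) (a : R) : Prop :=
  is_glb (fun r => exists x : H, vnorm x = 1 /\ r = vnorm (T x) ^ 2) a.

End Ops.

Arguments vnorm {H}.
Arguments bounded_operator {H}.
Arguments is_adjoint {H}.
Arguments cart_re {H}.
Arguments cart_im {H}.
Arguments is_opnorm {H}.
Arguments is_numrad {H}.
Arguments is_alpha {H}.

(* For a unit vector x, ||Tx||^2 + ||T^*x||^2 = 2||T1 x||^2 + 2||T2 x||^2, and by
   polarization ||T1|| and ||T2|| are both at most w(T); bounding one of the two
   Cartesian parts by w(T) and the other by its norm gives
   ||Tx||^2 + ||T^*x||^2 <= 2 w(T)^2 + D(T).  Since alpha of T^* is at most ||T^*x||^2,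
   this bounds ||T||^2 + alpha of T^*.  For alpha(T), put y = Tx/||Tx||: then
   ||Tx|| = <x, T^*y> <= ||T^*y||, and the same estimate at y applies. *)
From Pilot Require Import Defs.
From Stdlib Require Import Reals Lra Psatz.
Open Scope R_scope.

Lemma Ceq (a b : Cplx) : Re a = Re b -> Im a = Im b -> a = b.
Proof. now destruct a, b; simpl; intros; subst. Qed.

Lemma Cabs_ge0 (c : Cplx) : 0 <= Cabs c.
Proof. apply sqrt_pos. Qed.

Lemma Cabs_sq (c : Cplx) : Cabs c ^ 2 = Re c ^ 2 + Im c ^ 2.
Proof. unfold Cabs; rewrite <- Rsqr_pow2, Rsqr_sqrt; nra. Qed.

Lemma Re_le_Cabs (c : Cplx) : - Cabs c <= Re c <= Cabs c.
Proof. pose proof (Cabs_sq c); pose proof (Cabs_ge0 c); split; nra. Qed.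

Lemma Im_le_Cabs (c : Cplx) : - Cabs c <= Im c <= Cabs c.
Proof. pose proof (Cabs_sq c); pose proof (Cabs_ge0 c); split; nra. Qed.

Lemma Cabs_scal_real (k : R) (c : Cplx) : 0 <= k -> Cabs (Cmul (RtoC k) c) = k * Cabs c.
Proof.
  intro hk; unfold Cabs; cbn [Cmul RtoC Re Im].
  replace ((k * Re c - 0 * Im c) ^ 2 + (k * Im c + 0 * Re c) ^ 2)
    with (k ^ 2 * (Re c ^ 2 + Im c ^ 2)) by ring.
  rewrite sqrt_mult_alt, sqrt_pow2; nra.
Qed.

Section InnerProduct.
Variable H : HilbertSpace.
Implicit Types x y z : H.

Lemma vadd_self_eq_zero x : vadd x x = x -> x = vzero.
Proof.
  intro Hxx; transitivity (vadd (vadd x x) (vopp x)).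
  - now rewrite <- vadd_assoc, vadd_opp, vadd_0.
  - now rewrite Hxx; apply vadd_opp.
Qed.

Lemma inner_addl x y z : inner (vadd x y) z = Cadd (inner x z) (inner y z).
Proof. rewrite <- (vscal_1 H x) at 1; rewrite inner_lin; apply Ceq; simpl; ring. Qed.

Lemma inner_0l z : inner vzero z = Defs.C0.
Proof.
  pose proof (inner_addl vzero vzero z) as e; rewrite vadd_0 in e.
  apply (f_equal Re) in e as e1; apply (f_equal Im) in e as e2; simpl in e1, e2.
  apply Ceq; simpl; lra.
Qed.

Lemma inner_scall a x z : inner (vscal a x) z = Cmul a (inner x z).
Proof. rewrite <- (vadd_0 H (vscal a x)), inner_lin, inner_0l; apply Ceq; simpl; ring. Qed.

Lemma inner_oppl x z : inner (vopp x) z = mkC (- Re (inner x z)) (- Im (inner x z)).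
Proof.
  pose proof (inner_addl x (vopp x) z) as e; rewrite vadd_opp, inner_0l in e.
  apply (f_equal Re) in e as e1; apply (f_equal Im) in e as e2; simpl in e1, e2.
  apply Ceq; simpl; lra.
Qed.

Lemma inner_addr x y z : inner z (vadd x y) = Cadd (inner z x) (inner z y).
Proof.
  rewrite (inner_sym H (vadd x y) z), inner_addl, (inner_sym H x z), (inner_sym H y z).
  apply Ceq; simpl; ring.
Qed.

Lemma inner_scalr a x z : inner z (vscal a x) = Cmul (Cconj a) (inner z x).
Proof.
  rewrite (inner_sym H (vscal a x) z), inner_scall, (inner_sym H x z).
  apply Ceq; simpl; ring.
Qed.

Lemma inner_oppr x z : inner z (vopp x) = mkC (- Re (inner z x)) (- Im (inner z x)).
Proof.
  rewrite (inner_sym H (vopp x) z), inner_oppl, (inner_sym H x z).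
  apply Ceq; simpl; ring.
Qed.

Lemma Re_inner_sym x y : Re (inner y x) = Re (inner x y).
Proof. now rewrite inner_sym. Qed.

Lemma Im_inner_sym x y : Im (inner y x) = - Im (inner x y).
Proof. now rewrite inner_sym. Qed.

Lemma Im_inner_self x : Im (inner x x) = 0.
Proof. pose proof (Im_inner_sym x x); lra. Qed.

Definition sqnorm x : R := Re (inner x x).

Lemma sqnorm_ge0 x : 0 <= sqnorm x.
Proof. apply inner_pos. Qed.

Lemma sqnorm_eq0 x : sqnorm x = 0 -> x = vzero.
Proof. intro h; apply inner_def, Ceq; [exact h | apply Im_inner_self]. Qed.

Lemma vnorm_sq x : vnorm x ^ 2 = sqnorm x.
Proof. unfold vnorm; rewrite <- Rsqr_pow2; apply Rsqr_sqrt, inner_pos. Qed.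

Lemma vnorm_eq1 x : vnorm x = 1 <-> sqnorm x = 1.
Proof.
  split; intro h.
  - now rewrite <- vnorm_sq, h; ring.
  - now unfold vnorm; fold (sqnorm x); rewrite h; apply sqrt_1.
Qed.

End InnerProduct.

Arguments sqnorm {H}.

Ltac expand_inner :=
  unfold sqnorm;
  do 3 rewrite ?inner_addl, ?inner_addr, ?inner_oppl, ?inner_oppr, ?inner_scall, ?inner_scalr;
  cbn [Re Im Cadd Cmul Cconj RtoC Defs.C1 Defs.C0].

Section RealScaling.
Variable H : HilbertSpace.
Implicit Types x y z : H.

Lemma Re_inner_scalr_real k x z : Re (inner z (vscal (RtoC k) x)) = k * Re (inner z x).
Proof. expand_inner; ring. Qed.

Lemma inner_scal_real k x z :
  inner (vscal (RtoC k) x) (vscal (RtoC k) z) = Cmul (RtoC (k ^ 2)) (inner x z).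
Proof. expand_inner; apply Ceq; simpl; ring. Qed.

Lemma sqnorm_scal_real k x : sqnorm (vscal (RtoC k) x) = k ^ 2 * sqnorm x.
Proof. unfold sqnorm; rewrite inner_scal_real; simpl; ring. Qed.

Definition normalize x : H := vscal (RtoC (/ sqrt (sqnorm x))) x.

Lemma sqnorm_normalize x : 0 < sqnorm x -> sqnorm (normalize x) = 1.
Proof.
  intro hx; unfold normalize; rewrite sqnorm_scal_real.
  rewrite <- (sqrt_sqrt (sqnorm x)) at 2 by lra.
  field; apply Rgt_not_eq, sqrt_lt_R0, hx.
Qed.

Lemma Re_inner_normalize x : 0 < sqnorm x -> Re (inner x (normalize x)) = sqrt (sqnorm x).
Proof.
  intro hx; unfold normalize; rewrite Re_inner_scalr_real; fold (sqnorm x).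
  rewrite <- (sqrt_sqrt (sqnorm x)) at 2 by lra.
  field; apply Rgt_not_eq, sqrt_lt_R0, hx.
Qed.

Lemma unit_vector_exists : (exists x : H, x <> vzero) -> exists x : H, sqnorm x = 1.
Proof.
  intros [y hy]; exists (normalize y); apply sqnorm_normalize.
  destruct (sqnorm_ge0 H y) as [h | h]; [exact h |].
  now exfalso; apply hy, sqnorm_eq0.
Qed.

Lemma sqnorm_le_of_Re_inner_le (v : H) w : 0 <= w ->
  (forall z, sqnorm z = 1 -> Re (inner v z) <= w) -> sqnorm v <= w ^ 2.
Proof.
  intros hw hv; destruct (sqnorm_ge0 H v) as [hp | h0]; [| rewrite <- h0; nra].
  pose proof (hv _ (sqnorm_normalize v hp)) as hle.
  rewrite Re_inner_normalize in hle by exact hp.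
  rewrite <- (sqrt_sqrt (sqnorm v)) by lra; pose proof (sqrt_pos (sqnorm v)); nra.
Qed.

(* Cauchy-Schwarz, from positivity of the square norm of q - Re<x,q> x. *)
Lemma Re_inner_sq_le x q : sqnorm x = 1 -> Re (inner x q) ^ 2 <= sqnorm q.
Proof.
  intro hx; set (a := Re (inner x q)).
  pose proof (inner_pos H (vadd (vscal (RtoC (- a)) x) q)) as h.
  expand_inner; revert h; expand_inner; unfold sqnorm in hx.
  rewrite hx, (Re_inner_sym H x q), (Im_inner_sym H x q), (Im_inner_self H x); fold a.
  nra.
Qed.

End RealScaling.

Arguments normalize {H}.

Section Extremal.
Variables (H : HilbertSpace) (T : H -> H).

Lemma sqnorm_le_opnorm_sq n (x : H) : is_opnorm T n -> sqnorm x = 1 -> sqnorm (T x) <= n ^ 2.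
Proof.
  intros [Hub _] hx; rewrite <- vnorm_sq; apply pow_incr; split; [apply sqrt_pos |].
  now apply Hub; exists x; split; [apply vnorm_eq1 |].
Qed.

Lemma opnorm_sq_le n B : is_opnorm T n -> (exists x : H, sqnorm x = 1) ->
  (forall x, sqnorm x = 1 -> sqnorm (T x) <= B) -> n ^ 2 <= B.
Proof.
  intros [Hub Hlub] [x0 hx0] hB.
  assert (hB0 : 0 <= B) by (pose proof (sqnorm_ge0 H (T x0)); pose proof (hB x0 hx0); lra).
  assert (hn0 : 0 <= n).
  { apply Rle_trans with (vnorm (T x0)); [apply sqrt_pos |].
    now apply Hub; exists x0; split; [apply vnorm_eq1 |]. }
  assert (hn : n <= sqrt B).
  { apply Hlub; intros r [x [hx ->]]; apply sqrt_le_1_alt, hB, vnorm_eq1, hx. }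
  rewrite <- (sqrt_sqrt B hB0); pose proof (sqrt_pos B); nra.
Qed.

Lemma alpha_le_sqnorm a (x : H) : is_alpha T a -> sqnorm x = 1 -> a <= sqnorm (T x).
Proof.
  intros [Hlb _] hx; rewrite <- vnorm_sq.
  now apply Hlb; exists x; split; [apply vnorm_eq1 |].
Qed.

Lemma numrad_ge0 w : (exists x : H, sqnorm x = 1) -> is_numrad T w -> 0 <= w.
Proof.
  intros [x hx] [Hub _]; apply Rle_trans with (Cabs (inner (T x) x)); [apply Cabs_ge0 |].
  now apply Hub; exists x; split; [apply vnorm_eq1 |].
Qed.

End Extremal.

Section LinearOperator.
Variables (H : HilbertSpace) (T : H -> H).
Hypothesis T_linear : forall a x y, T (vadd (vscal a x) y) = vadd (vscal a (T x)) (T y).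

Lemma linear_zero : T vzero = vzero.
Proof.
  pose proof (T_linear Defs.C1 vzero vzero) as e; rewrite !vscal_1, vadd_0 in e.
  now apply vadd_self_eq_zero; symmetry.
Qed.

Lemma linear_scal a (x : H) : T (vscal a x) = vscal a (T x).
Proof. now rewrite <- (vadd_0 H (vscal a x)), T_linear, linear_zero, vadd_0. Qed.

Lemma Cabs_inner_le_numrad w (y : H) : is_numrad T w ->
  Cabs (inner (T y) y) <= w * sqnorm y.
Proof.
  intros Hw; destruct (sqnorm_ge0 H y) as [hp | h0].
  - set (k := / sqrt (sqnorm y)).
    assert (hk : 0 < k) by (apply Rinv_0_lt_compat, sqrt_lt_R0, hp).
    assert (hk2 : k ^ 2 * sqnorm y = 1).
    { rewrite <- (sqnorm_scal_real H k y); apply sqnorm_normalize, hp. }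
    assert (hu : Cabs (inner (T (normalize y)) (normalize y)) <= w).
    { now apply (proj1 Hw); exists (normalize y); split; [apply vnorm_eq1, sqnorm_normalize |]. }
    unfold normalize in hu; fold k in hu.
    rewrite linear_scal, inner_scal_real, Cabs_scal_real in hu by nra.
    pose proof (Cabs_ge0 (inner (T y) y)).
    apply Rmult_le_reg_l with (k ^ 2); [nra |].
    replace (k ^ 2 * (w * sqnorm y)) with (w * (k ^ 2 * sqnorm y)) by ring.
    rewrite hk2; lra.
  - symmetry in h0; rewrite h0, (sqnorm_eq0 H y h0), linear_zero, inner_0l.
    unfold Cabs; cbn [Re Im Defs.C0]; replace (0 ^ 2 + 0 ^ 2) with 0 by ring; rewrite sqrt_0; lra.
Qed.

(* Polarization with p = z + x and m = -z + x: the differences of <T p, p> and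
   <T m, m> recover the symmetric parts, while ||p||^2 + ||m||^2 = 4. *)
Lemma numrad_polarization w (x z : H) : is_numrad T w -> sqnorm x = 1 -> sqnorm z = 1 ->
  Re (inner (T x) z) + Re (inner (T z) x) <= 2 * w /\
  Im (inner (T x) z) + Im (inner (T z) x) <= 2 * w.
Proof.
  intros Hw hx hz.
  set (p := vadd (vscal Defs.C1 z) x); set (m := vadd (vscal (RtoC (-1)) z) x).
  pose proof (Re_le_Cabs (inner (T p) p)); pose proof (Im_le_Cabs (inner (T p) p)).
  pose proof (Re_le_Cabs (inner (T m) m)); pose proof (Im_le_Cabs (inner (T m) m)).
  pose proof (Cabs_inner_le_numrad w p Hw); pose proof (Cabs_inner_le_numrad w m Hw).
  assert (hpm : sqnorm p + sqnorm m = 4).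
  { unfold p, m; expand_inner; unfold sqnorm in hx, hz; rewrite hx, hz; ring. }
  assert (hRe : Re (inner (T p) p) - Re (inner (T m) m)
                = 2 * (Re (inner (T x) z) + Re (inner (T z) x))).
  { unfold p, m; rewrite !T_linear; expand_inner; ring. }
  assert (hIm : Im (inner (T p) p) - Im (inner (T m) m)
                = 2 * (Im (inner (T x) z) + Im (inner (T z) x))).
  { unfold p, m; rewrite !T_linear; expand_inner; ring. }
  split; nra.
Qed.

End LinearOperator.

Section Cartesian.
Variables (H : HilbertSpace) (T Tadj : H -> H).
Hypothesis T_adjoint : is_adjoint T Tadj.

Lemma Re_inner_cart_re (x z : H) :
  Re (inner (cart_re T Tadj x) z) = / 2 * (Re (inner (T x) z) + Re (inner (T z) x)).
Proof.
  unfold cart_re, op_scal, op_add; expand_inner.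
  rewrite (Re_inner_sym H z (Tadj x)), <- (T_adjoint z x); field.
Qed.

Lemma Re_inner_cart_im (x z : H) :
  Re (inner (cart_im T Tadj x) z) = / 2 * (Im (inner (T x) z) + Im (inner (T z) x)).
Proof.
  unfold cart_im, op_scal, op_sub; expand_inner.
  rewrite (Im_inner_sym H z (Tadj x)), <- (T_adjoint z x); field.
Qed.

Lemma sqnorm_add_adj (x : H) : sqnorm (T x) + sqnorm (Tadj x) =
  2 * sqnorm (cart_re T Tadj x) + 2 * sqnorm (cart_im T Tadj x).
Proof.
  unfold cart_re, cart_im, op_scal, op_add, op_sub; expand_inner.
  rewrite (Re_inner_sym H (T x) (Tadj x)), (Im_inner_sym H (T x) (Tadj x)),
    (Im_inner_self H (T x)), (Im_inner_self H (Tadj x)).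
  field.
Qed.

Hypothesis T_linear : forall a x y, T (vadd (vscal a x) y) = vadd (vscal a (T x)) (T y).

Lemma sqnorm_cart_re_le w (x : H) : is_numrad T w -> 0 <= w -> sqnorm x = 1 ->
  sqnorm (cart_re T Tadj x) <= w ^ 2.
Proof.
  intros Hw hw hx; apply sqnorm_le_of_Re_inner_le; [exact hw |]; intros z hz.
  rewrite Re_inner_cart_re; destruct (numrad_polarization H T T_linear w x z Hw hx hz); lra.
Qed.

Lemma sqnorm_cart_im_le w (x : H) : is_numrad T w -> 0 <= w -> sqnorm x = 1 ->
  sqnorm (cart_im T Tadj x) <= w ^ 2.
Proof.
  intros Hw hw hx; apply sqnorm_le_of_Re_inner_le; [exact hw |]; intros z hz.
  rewrite Re_inner_cart_im; destruct (numrad_polarization H T T_linear w x z Hw hx hz); lra.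
Qed.

Lemma sqnorm_add_adj_le w n1 n2 (x : H) : is_numrad T w -> 0 <= w ->
  is_opnorm (cart_re T Tadj) n1 -> is_opnorm (cart_im T Tadj) n2 -> sqnorm x = 1 ->
  sqnorm (T x) + sqnorm (Tadj x) <= 2 * w ^ 2 + 2 * Rmin (n1 ^ 2) (n2 ^ 2).
Proof.
  intros Hw hw Hn1 Hn2 hx; rewrite sqnorm_add_adj.
  pose proof (sqnorm_cart_re_le w x Hw hw hx); pose proof (sqnorm_cart_im_le w x Hw hw hx).
  pose proof (sqnorm_le_opnorm_sq H _ n1 x Hn1 hx).
  pose proof (sqnorm_le_opnorm_sq H _ n2 x Hn2 hx).
  apply Rmin_case_strong; intros; lra.
Qed.

End Cartesian.

Lemma sqnorm_le_adj_unit (H : HilbertSpace) (T Tadj : H -> H) (x : H) :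
  is_adjoint T Tadj -> sqnorm x = 1 ->
  exists y : H, sqnorm y = 1 /\ sqnorm (T x) <= sqnorm (Tadj y).
Proof.
  intros Hadj hx; destruct (sqnorm_ge0 H (T x)) as [hp | h0].
  - exists (normalize (T x)); split; [now apply sqnorm_normalize |].
    pose proof (Re_inner_sq_le H x (Tadj (normalize (T x))) hx) as hcs.
    rewrite <- Hadj, Re_inner_normalize, <- Rsqr_pow2, Rsqr_sqrt in hcs by lra.
    exact hcs.
  - exists x; split; [exact hx |]; rewrite <- h0; apply sqnorm_ge0.
Qed.

Theorem theorem2p1 (H : HilbertSpace) (T Tadj : H -> H)
  (Hnontriv : exists x : H, x <> vzero)
  (HT : bounded_operator T) (Hadj : is_adjoint T Tadj)
  (nT nT1 nT2 w aT aTadj : R)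
  (HnT : is_opnorm T nT)
  (HnT1 : is_opnorm (cart_re T Tadj) nT1)
  (HnT2 : is_opnorm (cart_im T Tadj) nT2)
  (Hw : is_numrad T w)
  (HaT : is_alpha T aT)
  (HaTadj : is_alpha Tadj aTadj) :
  nT ^ 2 + Rmax aT aTadj <= 2 * w ^ 2 + 2 * Rmin (nT1 ^ 2) (nT2 ^ 2).
Proof.
  destruct HT as [Hlin _].
  pose proof (unit_vector_exists H Hnontriv) as Hunit.
  pose proof (numrad_ge0 H T w Hunit Hw) as hw.
  set (K := 2 * w ^ 2 + 2 * Rmin (nT1 ^ 2) (nT2 ^ 2)).
  assert (HK : forall x, sqnorm x = 1 -> sqnorm (T x) + sqnorm (Tadj x) <= K)
    by (intros x; apply (sqnorm_add_adj_le H T Tadj Hadj Hlin); assumption).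
  assert (bound_adj : nT ^ 2 <= K - aTadj).
  { apply (opnorm_sq_le H T nT); [exact HnT | exact Hunit |]; intros x hx.
    pose proof (HK x hx); pose proof (alpha_le_sqnorm H Tadj aTadj x HaTadj hx); lra. }
  assert (bound_T : nT ^ 2 <= K - aT).
  { apply (opnorm_sq_le H T nT); [exact HnT | exact Hunit |]; intros x hx.
    destruct (sqnorm_le_adj_unit H T Tadj x Hadj hx) as [y [hy hxy]].
    pose proof (HK y hy); pose proof (alpha_le_sqnorm H T aT y HaT hy); lra. }
  enough (Rmax aT aTadj <= K - nT ^ 2) by lra.
  apply Rmax_lub; lra.
Qed.
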